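(* Let $D$ be a division ring, $n\ge 1$, $1\le k\le n$, and let $A=(a_{ij})\in\mathbb{M}_n(D)$ be a matrix all of whose rows other than the $k$-th row are zero. Then $A$ is a sum of two nilpotent matrices in $\mathbb{M}_n(D)$ if and only if $a_{kk}=0$.
   Context: $\mathbb{M}_n(D)$ denotes the ring of $n\times n$ matrices over the division ring $D$. *)

From mathcomp Require Import all_boot all_algebra.
Set Implicit Arguments. Unset Strict Implicit. Unset Printing Implicit Defensive.
Import GRing.Theory.
Local Open Scope ring_scope.

Definition division_ring (R : unitRingType) : Prop :=
  forall x : R, x != 0 -> x \is a GRing.unit.

Definition mx_nilpotent (R : pzRingType) (n : nat) (A : 'M[R]_n) : Prop :=
  exists m : nat, A ^+ m = 0.

From mathcomp Require Import all_boot all_algebra.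
Import GRing.Theory.
Local Open Scope ring_scope.

(* Sufficiency: if a_kk = 0 then A^2 = 0, so A = A + 0 is a sum of
   two nilpotents.  Necessity: write A = N - M with N, M nilpotent and set
     alpha_i = (A M^i)_kk,   beta_i = (A N^i)_kk.
   Because A vanishes off row k, (P A Q)_kk = P_kk (A Q)_kk for all P, Q; applying
   this to the noncommutative telescoping identity
     N^(m+1) - M^(m+1) = sum_(i <= m) M^i (N - M) N^(m-i)
   gives beta_(m+1) - alpha_(m+1) = sum_(i <= m) alpha_i beta_(m-i).  Both
   sequences vanish eventually and start with alpha_0 = beta_0 = a_kk.  If
   a_kk <> 0, let I, J be the last indices where alpha, beta are nonzero; at
   m = I + J the left side is 0 while the convolution reduces to the single
   term alpha_I beta_J, which is nonzero in a division ring: contradiction. *)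

(* Noncommutative telescoping of a difference of powers; the library's
   [subrXX_comm] needs commuting elements, which matrices are not. *)
Lemma subrXX_telescope (R : pzRingType) (N M : R) (m : nat) :
  N ^+ m.+1 - M ^+ m.+1 = \sum_(i < m.+1) M ^+ i * (N - M) * N ^+ (m - i).
Proof.
elim: m => [|m IH]; first by rewrite big_ord1 !expr0 mul1r mulr1 !expr1.
rewrite big_ord_recl /= expr0 mul1r subn0.
have -> : \sum_(i < m.+1) M ^+ (bump 0 i) * (N - M) * N ^+ (m.+1 - bump 0 i)
          = M * (N ^+ m.+1 - M ^+ m.+1).
  rewrite IH mulr_sumr; apply: eq_bigr => i _.
  by rewrite /bump /= add1n subSS exprS !mulrA.
by rewrite [N ^+ m.+2]exprS [M ^+ m.+2]exprS mulrBr !mulrBl addrA addrNK.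
Qed.

Lemma expr_eq0_ge {R : pzRingType} {x : R} {p i : nat} :
  x ^+ p = 0 -> (p <= i)%N -> x ^+ i = 0.
Proof. by move=> xp0 le_pi; rewrite -(subnKC le_pi) exprD xp0 mul0r. Qed.

Lemma last_nonzero {R : pzRingType} {a : nat -> R} {i0 : nat} (b : nat) :
  a i0 != 0 -> (forall i, (b <= i)%N -> a i = 0) ->
  exists I, a I != 0 /\ forall i, (I < i)%N -> a i = 0.
Proof.
move=> ai0 a_ge_b.
have ub i : a i != 0 -> (i <= b)%N.
  by move=> ai; rewrite leqNgt; apply: contra ai => /ltnW /a_ge_b ->.
have [I aI maxI] := ex_maxnP (ex_intro _ i0 ai0) ub.
exists I; split => // i lt_Ii; apply/eqP; apply: contraTT lt_Ii.
by rewrite -leqNgt => /maxI.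
Qed.

Lemma convolution_last {R : pzRingType} {a b : nat -> R} {I J : nat} :
  (forall i, (I < i)%N -> a i = 0) -> (forall j, (J < j)%N -> b j = 0) ->
  \sum_(i < (I + J).+1) a i * b (I + J - i)%N = a I * b J.
Proof.
move=> aI bJ; have lt_I : (I < (I + J).+1)%N by rewrite ltnS leq_addr.
rewrite (bigD1 (Ordinal lt_I)) //= addKn big1 ?addr0 // => i ne_iI.
have [lt_Ii | le_iI] := ltnP I i; first by rewrite aI ?mul0r.
have lt_iI : (i < I)%N.
  rewrite ltn_neqAle le_iI andbT; apply: contra ne_iI => /eqP eq_iI.
  exact/eqP/val_inj.
have le_iIJ : (i <= I + J)%N by rewrite -ltnS ltn_ord.
by rewrite bJ ?mulr0 // -(ltn_add2r i) subnK // addnC ltn_add2r.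
Qed.

Lemma divring_mulf_neq0 {R : unitRingType} {x y : R} :
  division_ring R -> x != 0 -> y != 0 -> x * y != 0.
Proof.
move=> divR x0 y0; apply: contra y0 => /eqP xy0.
by rewrite -(mulr0 x) in xy0; rewrite (mulrI (divR x x0) xy0).
Qed.

Definition row_supported {R : pzRingType} {m n : nat} (k : 'I_m) (X : 'M[R]_(m, n)) :=
  forall i j, i != k -> X i j = 0.

Lemma row_supported_mulmx {R : pzRingType} {m n p : nat} {k : 'I_m}
    {X : 'M[R]_(m, n)} (Q : 'M[R]_(n, p)) :
  row_supported k X -> row_supported k (X *m Q).
Proof. by move=> Xk i j ne_ik; rewrite mxE big1 // => l _; rewrite Xk ?mul0r. Qed.

Lemma mulmx_row_supported {R : pzRingType} {m n p : nat} {k : 'I_n}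
    (P : 'M[R]_(m, n)) {X : 'M[R]_(n, p)} :
  row_supported k X -> forall i j, (P *m X) i j = P i k * X k j.
Proof.
move=> Xk i j; rewrite mxE (bigD1 k) //= big1 ?addr0 // => l ne_lk.
by rewrite Xk ?mulr0.
Qed.

Lemma row_supported_sqr_eq0 {R : pzRingType} {n : nat} {k : 'I_n} {A : 'M[R]_n} :
  row_supported k A -> A k k = 0 -> A *m A = 0.
Proof.
move=> Ak Akk; apply/matrixP => i j; rewrite (mulmx_row_supported _ Ak) mxE.
by have [->|ne_ik] := eqVneq i k; rewrite ?Akk ?(Ak i) ?mul0r.
Qed.

Section Necessity.
Context {D : unitRingType} {n : nat} {k : 'I_n} {A : 'M[D]_n}.
Hypothesis Ak : row_supported k A.

Definition diag_seq (X : 'M[D]_n) (i : nat) : D := (A *m X ^+ i) k k.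

Lemma diag_seq0 (X : 'M[D]_n) : diag_seq X 0 = A k k.
Proof. by rewrite /diag_seq expr0 mulmx1. Qed.

Lemma diag_seq_nilpotent {X : 'M[D]_n} {i0 : nat} :
  mx_nilpotent X -> diag_seq X i0 != 0 ->
  exists I, diag_seq X I != 0 /\ forall i, (I < i)%N -> diag_seq X i = 0.
Proof.
move=> [p Xp] /(last_nonzero p); apply => i le_pi.
by rewrite /diag_seq (expr_eq0_ge Xp le_pi) mulmx0 mxE.
Qed.

Lemma diag_seq_convolution {N M : 'M[D]_n} (m : nat) : A = N - M ->
  diag_seq N m.+1 - diag_seq M m.+1
    = \sum_(i < m.+1) diag_seq M i * diag_seq N (m - i).
Proof.
move=> defA; rewrite /diag_seq.
have entryB (X Y : 'M[D]_n) : X k k - Y k k = (X - Y) k k by rewrite !mxE.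
rewrite entryB.
rewrite -mulmxBr mulmxE subrXX_telescope.
rewrite mulr_sumr summxE; apply: eq_bigr => i _.
rewrite -defA !mulrA -mulrA -!mulmxE.
by rewrite (mulmx_row_supported _ (row_supported_mulmx _ Ak)).
Qed.

(* Necessity: a difference of two nilpotent matrices has a_kk = 0, since
   otherwise the convolution identity at the sum of the last nonzero indices
   equates 0 with a product of nonzero elements. *)
Lemma sum_nilpotent_diag_eq0 {N M : 'M[D]_n} :
  division_ring D -> mx_nilpotent N -> mx_nilpotent M -> A = N - M -> A k k = 0.
Proof.
move=> divD nilN nilM defA; apply/eqP/negPn/negP => Akk0.
have diag_seq0_neq0 X : diag_seq X 0 != 0 by rewrite diag_seq0.
have [I [aI aI0]] := diag_seq_nilpotent nilM (diag_seq0_neq0 M).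
have [J [bJ bJ0]] := diag_seq_nilpotent nilN (diag_seq0_neq0 N).
have := diag_seq_convolution (I + J) defA.
rewrite aI0 ?bJ0 ?ltnS ?leq_addl ?leq_addr // subrr convolution_last // => /esym.
by apply/eqP; exact: divring_mulf_neq0.
Qed.

End Necessity.

Theorem lemma3p7 (D : unitRingType) (hD : division_ring D)
  (n : nat) (k : 'I_n) (A : 'M[D]_n)
  (hA : forall i j : 'I_n, i != k -> A i j = 0) :
  (exists B C : 'M[D]_n, [/\ mx_nilpotent B, mx_nilpotent C & A = B + C])
  <-> A k k = 0.
Proof.
split.
- move=> [B [C [nilB [q Cq] defA]]].
  have nil_oppC : mx_nilpotent (- C) by exists q; rewrite exprNn Cq mulr0.
  by apply: (sum_nilpotent_diag_eq0 hA hD nilB nil_oppC); rewrite opprK.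
- move=> Akk; exists A, 0; split; last by rewrite addr0.
  + by exists 2%N; rewrite expr2 -mulmxE (row_supported_sqr_eq0 hA).
  + by exists 1%N; rewrite expr1.
Qed.
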